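(* Let $u$ be a non-trivial u-p-word for $n$-permutations, and let $f$ be the number of occurrences of $\Diamond$ in $u$. Then $n\leq 3f+1$.
   Context: An $n$-permutation is a permutation of $\{1,\ldots,n\}$. For a word $w$ of distinct numbers, $\mathrm{red}(w)$ is obtained by replacing the $i$-th smallest letter by $i$. Let $\Diamond$ be a symbol not among the integers. A word $f_1\cdots f_n$ over the positive integers together with $\Diamond$, whose integer letters are pairwise distinct, covers an $n$-permutation $\pi$ if one can substitute real numbers for the occurrences of $\Diamond$ (independently) so that the resulting word has $n$ pairwise distinct entries and reduces to $\pi$; equivalently, $f_i<f_j\iff\pi_i<\pi_j$ for all positions $i,j$ holding integers. A u-p-word for $n$-permutations is a word $u_1\cdots u_N$, $N\geq n$, over this alphabet containing at least one $\Diamond$, such that every factor $u_i\cdots u_{i+n-1}$ ($1\leq i\leq N-n+1$) has pairwise distinct integer letters and every $n$-permutation is covered by exactly one of these factors. A u-p-word is trivial if all of its letters are $\Diamond$. *)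

From mathcomp Require Import all_boot all_order all_fingroup.
Set Implicit Arguments. Unset Strict Implicit. Unset Printing Implicit Defensive.

Definition letter := option nat.
Notation Diamond := (@None nat).

Definition distinct_ints (w : seq letter) : Prop :=
  forall (i j : nat) (a : nat), i < size w -> j < size w ->
    nth Diamond w i = Some a -> nth Diamond w j = Some a -> i = j.

(* w (of length n, with pairwise distinct integer letters) covers the
   n-permutation pi : 'S_n (pi maps position i to value pi i, values in 0..n-1,
   i.e. shifted by one, which does not affect order comparisons):
   f_i < f_j <-> pi_i < pi_j for all positions i, j holding integers. *)
Definition covers (n : nat) (w : seq letter) (pi : 'S_n) : Prop :=
  forall (i j : 'I_n) (a b : nat),
    nth Diamond w i = Some a -> nth Diamond w j = Some b ->
    (a < b) = (pi i < pi j).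

(* The factor u_{i+1} ... u_{i+n} (0-indexed start position i). *)
Definition factor (n : nat) (u : seq letter) (i : nat) : seq letter :=
  take n (drop i u).

Definition upword (n : nat) (u : seq letter) : Prop :=
  [/\ n <= size u,
      (forall k, Some k \in u -> 0 < k),
      Diamond \in u,
      (forall i, i <= size u - n -> distinct_ints (factor n u i)) &
      (forall pi : 'S_n, exists! i, i <= size u - n /\ covers (factor n u i) pi)].

Definition trivial_word (u : seq letter) : bool := all (pred1 Diamond) u.

From mathcomp Require Import all_boot all_order all_fingroup.
From mathcomp Require Import zify.
Set Implicit Arguments. Unset Strict Implicit. Unset Printing Implicit Defensive.

(* Suppose n >= 3f + 2, where f >= 1 is the number of diamonds. Then the diamonds are
   n-periodic. Indeed, let u_k be a diamond and u_(k+n) an integer. A permutation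
   ordered like the factor at k+1 on its first n-1 entries is covered only by the
   factors at 0 or k+1: if the factor at j covers it, prepending u_(j-1) to the factor
   at j and the diamond u_k to the factor at k+1 gives a permutation covered by the
   factors at j-1 and k, so j-1 = k. Fixing two positions that hold integers in both
   factors and placing the last entry below, between or above them gives three order
   patterns for only two factors. By periodicity the first diamond lies before position
   n and there are at most n f factors. A factor with d <= f diamonds covers at most
   n!/(n-d)! permutations, since a covered permutation is determined by its values at
   the diamonds; covering all n! permutations thus forces (n-f)! <= n f, which fails
   for n >= 3f + 2. *)

Section RankPerm.

Variables (n : nat) (key : nat -> nat).
Hypothesis key_inj : {in gtn n &, injective key}.

Definition rank (i : 'I_n) : nat := #|[pred j : 'I_n | key j < key i]|.

Lemma rank_lt (i : 'I_n) : rank i < n.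
Proof.
rewrite -[n in _ < n]card_ord; apply: proper_card; apply/properP.
by split; [apply/subsetP | exists i; rewrite ?inE ?ltnn].
Qed.

Lemma rank_homo (i j : 'I_n) : key i < key j -> rank i < rank j.
Proof.
move=> lt_ij; apply: proper_card; apply/properP; split.
  by apply/subsetP => x; rewrite !inE => /ltn_trans; apply.
by exists i; rewrite !inE ?ltnn.
Qed.

Lemma rank_mono : {mono (fun i : 'I_n => rank i) : i j / key i < key j >-> i < j}.
Proof.
move=> i j; case: (ltngtP (key i) (key j)) => [/rank_homo //|/rank_homo|].
  by move/ltnW; rewrite leqNgt => /negbTE.
by move/(key_inj (ltn_ord i) (ltn_ord j))/val_inj ->; rewrite ltnn.
Qed.

Lemma rank_inj : injective (fun i => Ordinal (rank_lt i)).
Proof.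
move=> i j /(congr1 val) /= eq_r; apply: val_inj.
apply: (key_inj (ltn_ord i) (ltn_ord j)).
by case: (ltngtP (key i) (key j)) => // /rank_homo; rewrite eq_r ltnn.
Qed.

Definition rank_perm : 'S_n := perm rank_inj.

Lemma rank_perm_mono : {mono rank_perm : i j / key i < key j >-> i < j}.
Proof. by move=> i j; rewrite !permE /= rank_mono. Qed.

End RankPerm.

(* Permutations are handled as order keys on nat, with junk value 0 outside 'I_n. *)
Definition natperm n (pi : 'S_n) (s : nat) : nat :=
  if insub s is Some i then val (pi i) else 0.

Lemma natpermE n (pi : 'S_n) (i : 'I_n) : natperm pi i = pi i.
Proof. by rewrite /natperm valK. Qed.

Lemma natperm_lt n (pi : 'S_n) s : s < n -> natperm pi s < n.
Proof. by move=> hs; rewrite -[s]/(val (Ordinal hs)) natpermE. Qed.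

Lemma natperm_inj n (pi : 'S_n) : {in gtn n &, injective (natperm pi)}.
Proof.
move=> s t; rewrite !inE => hs ht.
rewrite -[s]/(val (Ordinal hs)) -[t]/(val (Ordinal ht)) !natpermE.
by move=> /val_inj/perm_inj [].
Qed.

Lemma natperm_rank_perm n key (key_inj : {in gtn n &, injective key}) :
  {in gtn n &, {mono natperm (rank_perm key_inj) : s t / key s < key t >-> s < t}}.
Proof.
move=> s t; rewrite !inE => hs ht.
by rewrite -[s]/(val (Ordinal hs)) -[t]/(val (Ordinal ht)) !natpermE rank_perm_mono.
Qed.

Definition letter_lt (x y : letter) : bool :=
  if (x, y) is (Some a, Some b) then a < b else false.

Section Windows.

Variable u : seq letter.

Definition window_agrees (j m : nat) (key : nat -> nat) : Prop :=
  forall s t a b, s < m -> t < m ->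
    nth Diamond u (j + s) = Some a -> nth Diamond u (j + t) = Some b ->
    (a < b) = (key s < key t).

Lemma eq_window_agrees j m key1 key2 :
    {in gtn m &, forall s t, (key1 s < key1 t) = (key2 s < key2 t)} ->
  window_agrees j m key1 -> window_agrees j m key2.
Proof. by move=> eq_key agr s t a b hs ht ua ub; rewrite -eq_key ?inE //; apply: agr. Qed.

Lemma window_agreesW j m m' key :
  m' <= m -> window_agrees j m key -> window_agrees j m' key.
Proof. by move=> le_m agr s t a b hs ht; apply: agr; apply: leq_trans le_m. Qed.

(* Odd keys for the old positions leave room to slot the new key 2c anywhere. *)
Definition cons_key (c : nat) (key : nat -> nat) (s : nat) : nat :=
  if s is s'.+1 then (key s').*2.+1 else c.*2.

Lemma cons_key_inj m c key :
  {in gtn m &, injective key} -> {in gtn m.+1 &, injective (cons_key c key)}.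
Proof.
move=> key_inj [|s] [|t] //=; rewrite !inE ?ltnS => hs ht; try lia.
by move=> /eqP; rewrite eqSS -!muln2 eqn_mul2r /= => /eqP /key_inj ->.
Qed.

Lemma lt_cons_key c key s t :
  (cons_key c key s.+1 < cons_key c key t.+1) = (key s < key t).
Proof. by rewrite /= ltnS ltn_double. Qed.

Lemma window_agrees_cons_diamond j m c key :
  nth Diamond u j = Diamond -> window_agrees j.+1 m key ->
  window_agrees j m.+1 (cons_key c key).
Proof.
move=> uj agr [|s] [|t] a b; rewrite ?addn0 ?uj // -!addSnnS => /ltnSE hs /ltnSE ht ua ub.
by rewrite lt_cons_key; apply: agr ua ub.
Qed.

(* The new first integer gets a key just above those of the integers it exceeds. *)
Lemma window_agrees_cons j m key :
    (forall s a, s < m -> nth Diamond u j = Some a -> nth Diamond u (j.+1 + s) != Some a) ->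
    window_agrees j.+1 m key ->
  exists c, window_agrees j m.+1 (cons_key c key).
Proof.
move=> uniq_j agr; case uj: (nth Diamond u j) => [a0|]; last first.
  by exists 0; apply: window_agrees_cons_diamond.
pose c := \max_(s < m | letter_lt (nth Diamond u (j.+1 + s)) (Some a0)) (key s).+1.
have cut s b : s < m -> nth Diamond u (j.+1 + s) = Some b -> (a0 < b) = (c <= key s).
  move=> hs ub; case: (ltngtP a0 b) => [lt_ab|lt_ba|eq_ab].
  - apply/esym/bigmax_leqP => s' /=; case ub': (nth Diamond u _) => [b'|] //= lt_b'a.
    by rewrite -(agr _ _ _ _ (ltn_ord s') hs ub' ub) (ltn_trans lt_b'a).
  - apply/esym/negbTE; rewrite -ltnNge.
    apply: (@leq_bigmax_cond _ _ (fun s : 'I_m => (key s).+1) (Ordinal hs)).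
    by rewrite /= ub.
  - by have := uniq_j s a0 hs uj; rewrite ub eq_ab eqxx.
exists c => -[|s] [|t] a b; rewrite ?addn0 ?uj // -?addSnnS => /ltnSE hs /ltnSE ht.
- by move=> [<-] [<-]; rewrite !ltnn.
- move=> [<-] ub; have := cut t b ht ub; rewrite /= -!muln2; lia.
- move=> ua [<-]; have := cut s a hs ua; have := uniq_j s a0 hs uj.
  rewrite ua (inj_eq Some_inj) /= -!muln2; lia.
- by move=> ua ub; rewrite lt_cons_key; apply: agr ua ub.
Qed.

End Windows.

Section Factors.

Variables (n : nat) (u : seq letter).

Lemma size_factor j : j + n <= size u -> size (factor n u j) = n.
Proof. by move=> hj; rewrite size_take size_drop; apply/minn_idPl; lia. Qed.

Lemma nth_factor j s : s < n -> nth Diamond (factor n u j) s = nth Diamond u (j + s).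
Proof. by move=> hs; rewrite nth_take // nth_drop. Qed.

Lemma covers_factorE j (pi : 'S_n) :
  covers (factor n u j) pi <-> window_agrees u j n (natperm pi).
Proof.
split=> [cov s t a b hs ht ua ub | agr x y a b].
  by rewrite -[s]/(val (Ordinal hs)) -[t]/(val (Ordinal ht)) !natpermE; apply: cov;
    rewrite nth_factor.
by rewrite !nth_factor // -!natpermE; apply: agr.
Qed.

Lemma count_factor j : j + n <= size u ->
  count_mem Diamond (factor n u j) =
  count (fun s => nth Diamond u (j + s) == Diamond) (iota 0 n).
Proof.
move=> hj; rewrite -[in LHS](mkseq_nth Diamond (factor n u j)) size_factor //.
rewrite count_map; apply: eq_in_count => s.
by rewrite mem_iota /= => hs; rewrite nth_factor.
Qed.

Lemma count_factor_le j : count_mem Diamond (factor n u j) <= count_mem Diamond u.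
Proof.
rewrite -[in X in _ <= X](cat_take_drop j u) -(cat_take_drop n (drop j u)) !count_cat.
by rewrite addnCA leq_addr.
Qed.

End Factors.

Lemma distinct_covered n (w : seq letter) :
  size w = n -> distinct_ints w -> exists pi : 'S_n, covers w pi.
Proof.
(* Order by value, breaking ties (which occur only between diamonds) by position. *)
move=> sw dw; pose key s := odflt 0 (nth Diamond w s) * n + s.
have key_inj : {in gtn n &, injective key}.
  move=> s t hs ht /(congr1 (modn^~ n)); rewrite !modnMDl !modn_small //.
exists (rank_perm key_inj) => x y a b wa wb; rewrite rank_perm_mono /key wa wb /=.
case: (ltngtP a b) => [lt_ab|lt_ba|eq_ab].
- by apply/esym/idP; have := ltn_ord x; nia.
- by apply/esym/negbTE; rewrite -leqNgt; have := ltn_ord y; nia.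
- have /val_inj -> : val x = val y by apply: (dw x y a); rewrite ?sw // eq_ab.
  by rewrite eq_ab ltnn.
Qed.

Lemma nth_rev_window (u : seq letter) j m s : j + m <= size u -> s < m ->
  nth Diamond (rev u) (j + s) = nth Diamond u (size u - m - j + (m.-1 - s)).
Proof. by move=> hj hs; rewrite nth_rev -/letter; [congr (nth _ _); lia | lia]. Qed.

Lemma window_agrees_rev (u : seq letter) j m key : j + m <= size u ->
  window_agrees u (size u - m - j) m key ->
  window_agrees (rev u) j m (fun s => key (m.-1 - s)).
Proof.
move=> hj agr s t a b hs ht; rewrite (nth_rev_window hj hs) (nth_rev_window hj ht).
by apply: agr; lia.
Qed.

Lemma window_agrees_revE (u : seq letter) j m key : j + m <= size u ->
  window_agrees (rev u) j m (fun s => key (m.-1 - s)) <->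
  window_agrees u (size u - m - j) m key.
Proof.
move=> hj; split=> [agr|]; last exact: window_agrees_rev.
have hj' : size u - m - j + m <= size (rev u) by rewrite size_rev; lia.
have e : size (rev u) - m - (size u - m - j) = j by rewrite size_rev; lia.
move: (@window_agrees_rev (rev u) _ _ (fun s => key (m.-1 - s)) hj').
rewrite revK e => /(_ agr).
by apply: eq_window_agrees => s t; rewrite !inE => hs ht; rewrite !subKn //; lia.
Qed.

Definition rev_perm n : 'S_n := perm (@rev_ord_inj n).

Lemma natperm_rev n (pi : 'S_n) s : s < n ->
  natperm (rev_perm n * pi)%g s = natperm pi (n.-1 - s).
Proof.
move=> hs; rewrite -[s]/(val (Ordinal hs)) natpermE permM permE.
by rewrite -natpermE /=; congr natperm; lia.
Qed.

Lemma upword_rev n u : upword n u -> upword n (rev u).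
Proof.
case=> le_nu pos_u diam_u uniq_u cov_u.
have covE i (pi : 'S_n) : i <= size u - n ->
    covers (factor n (rev u) i) pi <->
    covers (factor n u (size u - n - i)) (rev_perm n * pi)%g.
  move=> hi; have hi' : i + n <= size u by lia.
  rewrite !covers_factorE -(window_agrees_revE (natperm (rev_perm n * pi)%g) hi').
  have invol s : s < n -> n.-1 - (n.-1 - s) = s by lia.
  by split; apply: eq_window_agrees => s t; rewrite !inE => hs ht;
    rewrite !natperm_rev ?invol //; lia.
split; rewrite ?size_rev //.
- by move=> k; rewrite mem_rev; apply: pos_u.
- by rewrite mem_rev.
- move=> i hi s t a; have hin : i + n <= size u by lia.
  rewrite size_factor ?size_rev // => hs ht.
  rewrite !nth_factor // (nth_rev_window hin hs) (nth_rev_window hin ht) => ua ub.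
  have := uniq_u (size u - n - i) (leq_subr _ _) (n.-1 - s) (n.-1 - t) a.
  rewrite size_factor ?nth_factor; try lia.
  by move=> /(_ _ _ ua ub); lia.
- move=> pi; have [i [[hi covi] uniqi]] := cov_u (rev_perm n * pi)%g.
  exists (size u - n - i); split.
    by split; [lia | apply/covE; [lia | rewrite subKn]].
  move=> j [hj /(covE _ _ hj) covj].
  by have := uniqi _ (conj (leq_subr _ _) covj); lia.
Qed.

Lemma count_iota_gt1 (P : pred nat) m :
  1 < count P (iota 0 m) -> exists p q, [/\ p < m, q < m, p != q, P p & P q].
Proof.
move=> hc; pose l := filter P (iota 0 m).
have sl : 1 < size l by rewrite size_filter.
have ul : uniq l by rewrite filter_uniq ?iota_uniq.
have inl x : x \in l -> x < m /\ P x by rewrite mem_filter mem_iota => /andP[-> /andP[]].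
have [hp Pp] := inl _ (mem_nth 0 (ltnW sl)); have [hq Pq] := inl _ (mem_nth 0 sl).
by exists (nth 0 l 0), (nth 0 l 1); split; rewrite ?nth_uniq ?(ltnW sl).
Qed.

Lemma two_common_int_positions (u : seq letter) i j m :
    i + m <= size u -> j + m <= size u -> 2 * count_mem Diamond u + 2 <= m ->
  exists p q, [/\ p < m, q < m, p != q &
    [/\ nth Diamond u (i + p) != Diamond, nth Diamond u (i + q) != Diamond,
        nth Diamond u (j + p) != Diamond & nth Diamond u (j + q) != Diamond]].
Proof.
move=> hi hj few.
pose diam_at l s := nth Diamond u (l + s) == Diamond.
pose good s := ~~ diam_at i s && ~~ diam_at j s.
have : 1 < count good (iota 0 m).
  have := count_predC good (iota 0 m); rewrite size_iota.
  have := count_predUI (diam_at i) (diam_at j) (iota 0 m).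
  have -> : count (predC good) (iota 0 m) =
            count (predU (diam_at i) (diam_at j)) (iota 0 m).
    by apply: eq_count => s; rewrite /= negb_and !negbK.
  have ci : count (diam_at i) (iota 0 m) <= count_mem Diamond u.
    by rewrite -(count_factor hi) count_factor_le.
  have cj : count (diam_at j) (iota 0 m) <= count_mem Diamond u.
    by rewrite -(count_factor hj) count_factor_le.
  lia.
move=> /count_iota_gt1 [p [q [hp hq pq /andP[uip ujp] /andP[uiq ujq]]]].
by exists p, q.
Qed.

Section UPWord.

Variables (n : nat) (u : seq letter).
Hypothesis up : upword n u.

Lemma upword_window_uniq j s t a : j <= size u - n -> s < n -> t < n ->
  nth Diamond u (j + s) = Some a -> nth Diamond u (j + t) = Some a -> s = t.
Proof.
case: up => le_nu _ _ uniq_u _ hj hs ht.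
rewrite -(nth_factor u j hs) -(nth_factor u j ht).
by apply: uniq_u; rewrite ?size_factor //; lia.
Qed.

Lemma upword_agrees_exists (pi : 'S_n) :
  exists2 j, j <= size u - n & window_agrees u j n (natperm pi).
Proof. by case: up => _ _ _ _ /(_ pi) [j [[hj /covers_factorE agr] _]]; exists j. Qed.

Lemma upword_agrees_unique (pi : 'S_n) j1 j2 : j1 <= size u - n -> j2 <= size u - n ->
  window_agrees u j1 n (natperm pi) -> window_agrees u j2 n (natperm pi) -> j1 = j2.
Proof.
case: up => _ _ _ _ /(_ pi) [j [_ uniq_j]] h1 h2 /covers_factorE c1 /covers_factorE c2.
by rewrite -(uniq_j j1) ?(uniq_j j2).
Qed.

End UPWord.

Section Periodicity.

Variables (n : nat) (u : seq letter) (k : nat).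
Hypotheses (up : upword n u) (n_gt0 : 0 < n).
Hypotheses (diamond_k : nth Diamond u k = Diamond) (window_k1 : k.+1 <= size u - n).

Lemma head_agrees_cover (pi : 'S_n) j :
    window_agrees u k.+1 n.-1 (natperm pi) -> j <= size u - n ->
    window_agrees u j n (natperm pi) ->
  j = 0 \/ j = k.+1.
Proof.
move=> agr_k; case: j => [|j] hj agr_j; [by left | right; congr S].
have en : n.-1.+1 = n := prednK n_gt0.
have [c agr_j'] : exists c, window_agrees u j n.-1.+1 (cons_key c (natperm pi)).
  apply: window_agrees_cons; last by apply: window_agreesW agr_j; rewrite leq_pred.
  move=> s a hs uj; apply/eqP => ujs.
  have hs1 : s.+1 < n by rewrite -en ltnS.
  have := upword_window_uniq up (ltnW hj) n_gt0 hs1.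
  by rewrite addn0 -addSnnS => /(_ a uj ujs).
have agr_k' : window_agrees u k n.-1.+1 (cons_key c (natperm pi)).
  exact: window_agrees_cons_diamond.
have key_inj : {in gtn n.-1.+1 &, injective (cons_key c (natperm pi))}.
  apply: cons_key_inj => s t; rewrite !inE => hs ht.
  by apply: natperm_inj; rewrite inE; lia.
rewrite en in agr_j' agr_k' key_inj.
have agrees_rank l : window_agrees u l n (cons_key c (natperm pi)) ->
    window_agrees u l n (natperm (rank_perm key_inj)).
  by apply: eq_window_agrees => s t hs ht; rewrite natperm_rank_perm.
by apply: (upword_agrees_unique up _ _ (agrees_rank _ agr_j') (agrees_rank _ agr_k')); lia.
Qed.

Variable pstar : 'S_n.
Hypothesis pstar_agrees : window_agrees u k.+1 n (natperm pstar).

(* The permutation ordered like [pstar] on the first n-1 positions, whose last entry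
   lies just above the entries of [pstar] that are smaller than t. *)
Definition last_key (t s : nat) : nat :=
  if s == n.-1 then t.*2 else (natperm pstar s).*2.+1.

Lemma last_key_inj t : {in gtn n &, injective (last_key t)}.
Proof.
move=> s s'; rewrite !inE /last_key => hs hs'.
case: eqP => [->|ne]; case: eqP => [->|ne'] //; rewrite -!muln2; try lia.
by move=> e; apply: (natperm_inj (pi := pstar)); rewrite ?inE; lia.
Qed.

Definition last_perm t : 'S_n := rank_perm (@last_key_inj t).

Lemma last_perm_head t :
  {in gtn n.-1 &, {mono natperm (last_perm t) : s s' /
    natperm pstar s < natperm pstar s' >-> s < s'}}.
Proof.
move=> s s'; rewrite !inE => hs hs'; rewrite natperm_rank_perm ?inE; try lia.
by rewrite /last_key !ltn_eqF // ltnS ltn_double.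
Qed.

Lemma last_perm_last t s : s < n.-1 ->
  (natperm (last_perm t) s < natperm (last_perm t) n.-1) = (natperm pstar s < t).
Proof.
move=> hs; rewrite natperm_rank_perm ?inE; try lia.
by rewrite /last_key ltn_eqF // eqxx -!muln2; lia.
Qed.

Lemma last_perm_cover t :
  exists2 j, j = 0 \/ j = k.+1 & window_agrees u j n (natperm (last_perm t)).
Proof.
have [j hj agr] := upword_agrees_exists up (last_perm t).
exists j => //; apply: head_agrees_cover hj agr.
apply: eq_window_agrees (window_agreesW (leq_pred n) pstar_agrees) => s s' hs hs'.
by rewrite last_perm_head.
Qed.

Lemma last_perm_not_cover0 t :
  nth Diamond u n.-1 = Diamond -> ~ window_agrees u 0 n (natperm (last_perm t)).
Proof.
move=> last_diam agr0.
suff agr_pstar : window_agrees u 0 n (natperm pstar).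
  by have := upword_agrees_unique up (leq0n _) window_k1 agr_pstar pstar_agrees.
have lt_s x c : x < n -> nth Diamond u (0 + x) = Some c -> x < n.-1.
  move=> hx ux; rewrite ltn_neqAle -ltnS prednK // hx andbT; apply/eqP => ex.
  by rewrite ex add0n last_diam in ux.
move=> s s' a b hs hs' ua ub.
rewrite -(last_perm_head t) ?inE ?(lt_s _ _ hs ua) ?(lt_s _ _ hs' ub) //.
exact: agr0 ua ub.
Qed.

Variables (p q : nat).
Hypotheses (p_lt : p < n.-1) (q_lt : q < n.-1) (p_neq_q : p != q).
Hypothesis ints_pq :
  [/\ nth Diamond u (0 + p) != Diamond, nth Diamond u (0 + q) != Diamond,
      nth Diamond u (k.+1 + p) != Diamond & nth Diamond u (k.+1 + q) != Diamond].
Hypothesis int_last : nth Diamond u (k.+1 + n.-1) != Diamond.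

Definition below_count t := (natperm pstar p < t) + (natperm pstar q < t).

Definition window_below j :=
  letter_lt (nth Diamond u (j + p)) (nth Diamond u (j + n.-1)) +
  letter_lt (nth Diamond u (j + q)) (nth Diamond u (j + n.-1)).

Lemma window_below_last_perm j t : window_agrees u j n (natperm (last_perm t)) ->
    nth Diamond u (j + p) != Diamond -> nth Diamond u (j + q) != Diamond ->
    nth Diamond u (j + n.-1) != Diamond ->
  window_below j = below_count t.
Proof.
move=> agr; case ujp: (nth Diamond u (j + p)) => [a|] // _.
case ujq: (nth Diamond u (j + q)) => [b|] // _; case ujl: (nth Diamond u _) => [c|] // _.
have hl : n.-1 < n by rewrite prednK.
rewrite /window_below /letter_lt ujp ujq ujl.
rewrite (agr _ _ _ _ _ hl ujp ujl) ?(agr _ _ _ _ _ hl ujq ujl) ?last_perm_last //; lia.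
Qed.

Lemma below_count_windows t :
  below_count t = window_below 0 \/ below_count t = window_below k.+1.
Proof.
case: ints_pq => u0p u0q ukp ukq.
have [j [->|->] agr] := last_perm_cover t; [left | right];
  apply/esym/window_below_last_perm => //.
by case u0l: (nth Diamond u _) => //; case: (last_perm_not_cover0 u0l agr).
Qed.

Lemma periodic_contradiction : False.
Proof.
set P := natperm pstar p; set Q := natperm pstar q.
have [P_lt Q_lt] : P < n /\ Q < n by split; apply: natperm_lt; lia.
have ne_PQ : P != Q by apply: contra_neq p_neq_q; apply: natperm_inj; rewrite inE; lia.
have c0 : below_count 0 = 0 by rewrite /below_count !ltn0.
have cn : below_count n = 2 by rewrite /below_count -/P -/Q P_lt Q_lt.
have cm : below_count (maxn P Q) = 1.
  by rewrite /below_count -/P -/Q; case: (ltngtP P Q) ne_PQ => // h _; rewrite h ltnn.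
(* Three distinct counts, but only two windows to read them from. *)
have := below_count_windows 0; have := below_count_windows n.
have := below_count_windows (maxn P Q).
lia.
Qed.

End Periodicity.

Lemma diamond_periodic n u k : upword n u -> 2 * count_mem Diamond u + 3 <= n ->
  nth Diamond u k = Diamond -> k + n < size u -> nth Diamond u (k + n) = Diamond.
Proof.
move=> up few uk hkn; case ukn: (nth Diamond u (k + n)) => [y|] //; exfalso.
have n_gt0 : 0 < n by lia.
have hk1 : k.+1 <= size u - n by lia.
have [p [q [hp hq pq ints_pq]]] := @two_common_int_positions u 0 k.+1 n.-1
  ltac:(lia) ltac:(lia) ltac:(lia).
have [pstar /covers_factorE pstar_agrees] :
    exists pstar : 'S_n, covers (factor n u k.+1) pstar.
  apply: distinct_covered; first by rewrite size_factor; lia.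
  by case: up => _ _ _ uniq_u _; apply: uniq_u.
apply: (periodic_contradiction up n_gt0 uk hk1 pstar_agrees hp hq pq ints_pq).
by rewrite addSnnS prednK // ukn.
Qed.

Lemma diamond_periodic_back n u k : upword n u -> 2 * count_mem Diamond u + 3 <= n ->
  nth Diamond u k = Diamond -> n <= k -> k < size u -> nth Diamond u (k - n) = Diamond.
Proof.
move=> up few uk hnk hk.
have := @diamond_periodic n (rev u) (size u - k.+1) (upword_rev up).
have e1 : size u - (size u - k.+1).+1 = k by lia.
have e2 : size u - (size u - k.+1 + n).+1 = k - n by lia.
by rewrite count_rev size_rev !nth_rev ?e1 ?e2 // -/letter; try apply => //; lia.
Qed.

Lemma count_drop_le (u : seq letter) i j :
  i <= j -> count_mem Diamond (drop j u) <= count_mem Diamond (drop i u).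
Proof.
move=> /subnK <-; rewrite -drop_drop.
by rewrite -[drop i u in X in _ <= X](cat_take_drop (j - i)) count_cat leq_addl.
Qed.

Section WindowCount.

Variables (n : nat) (u : seq letter).
Hypotheses (up : upword n u) (few : 2 * count_mem Diamond u + 3 <= n).

Lemma tail_diamonds k : nth Diamond u k = Diamond -> k < size u ->
  size u - k <= n * count_mem Diamond (drop k u).
Proof.
have [d] := ubnP (size u - k); elim: d k => // d IH k hd uk hk.
have -> : count_mem Diamond (drop k u) = (count_mem Diamond (drop k.+1 u)).+1.
  by rewrite (drop_nth Diamond hk) /= uk eqxx.
rewrite mulnS; case: (ltnP (k + n) (size u)) => hkn; last lia.
have le_c : count_mem Diamond (drop (k + n) u) <= count_mem Diamond (drop k.+1 u).
  by apply: count_drop_le; lia.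
have := IH (k + n) ltac:(lia) (diamond_periodic up few uk hkn) hkn.
have := leq_mul (leqnn n) le_c; lia.
Qed.

Lemma first_diamond_lt : index Diamond u < n.
Proof.
case: (up) => _ _ diam_u _ _; rewrite ltnNge; apply/negP => hn.
have hk : index Diamond u < size u by rewrite index_mem.
have back := diamond_periodic_back up few (nth_index Diamond diam_u) hn hk.
have := @index_nth _ Diamond (index Diamond u - n) u (leq_ltn_trans (leq_subr _ _) hk).
by rewrite back; lia.
Qed.

Lemma windows_le_mul_count : size u - n + 1 <= n * count_mem Diamond u.
Proof.
case: (up) => le_nu _ diam_u _ _.
have hk : index Diamond u < size u by rewrite index_mem.
have := tail_diamonds (nth_index Diamond diam_u) hk.
have := leq_mul (leqnn n) (count_drop_le u (leq0n (index Diamond u))).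
by rewrite drop0; have := first_diamond_lt; lia.
Qed.

End WindowCount.

Definition coversb n (w : seq letter) (pi : 'S_n) : bool :=
  [forall x : 'I_n, forall y : 'I_n,
    if (nth Diamond w x, nth Diamond w y) is (Some a, Some b)
    then (a < b) == (pi x < pi y) else true].

Lemma coversP n w (pi : 'S_n) : reflect (covers w pi) (coversb w pi).
Proof.
apply: (iffP forallP) => [cov x y a b wx wy | cov x]; last apply/forallP => y.
  by have /forallP/(_ y) := cov x; rewrite wx wy => /eqP.
case wx: (nth Diamond w x) => [a|] //; case wy: (nth Diamond w y) => [b|] //.
by apply/eqP; apply: cov.
Qed.

(* Induction on the value v: if the positions carrying v in pi1 and pi2 held distinct
   integers, the one with the smaller integer would carry a smaller value in the other
   permutation, hence by induction in both. *)
Lemma perm_determined n (w : seq letter) (pi1 pi2 : 'S_n) :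
    size w = n -> distinct_ints w -> covers w pi1 -> covers w pi2 ->
    (forall x : 'I_n, nth Diamond w x = Diamond -> pi1 x = pi2 x) ->
  pi1 = pi2.
Proof.
move=> sw dw c1 c2 eq_diam.
suff eq_inv (v : 'I_n) : (pi1^-1 v = pi2^-1 v)%g.
  by apply: invg_inj; apply/permP => v; apply: eq_inv.
have [N] := ubnP v; elim: N v => // N IH v hv.
have below (s1 s2 : 'S_n) (x y : 'I_n) a b :
    covers w s2 -> (forall v' : 'I_n, v' < v -> (s1^-1 v' = s2^-1 v')%g) ->
    s1 x = v -> s2 y = v -> nth Diamond w x = Some a -> nth Diamond w y = Some b ->
  a < b -> False.
  move=> cov2 eq_below ex ey wx wy lt_ab.
  have lt_v : s2 x < v by rewrite -ey -(cov2 _ _ _ _ wx wy).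
  have : (s1^-1 (s2 x))%g = x by rewrite eq_below // permK.
  by move=> /(congr1 s1); rewrite permKV ex => e; move: lt_v; rewrite e ltnn.
have IHv (v' : 'I_n) : v' < v -> (pi1^-1 v' = pi2^-1 v')%g by move=> lt_v; apply: IH; lia.
have e1 : pi1 (pi1^-1 v)%g = v by rewrite permKV.
have e2 : pi2 (pi2^-1 v)%g = v by rewrite permKV.
case w1: (nth Diamond w (pi1^-1 v)%g) => [a|].
  case w2: (nth Diamond w (pi2^-1 v)%g) => [b|].
    case: (ltngtP a b) => [lt_ab|lt_ba|eq_ab].
    - by case: (below _ _ _ _ _ _ c2 IHv e1 e2 w1 w2 lt_ab).
    - by case: (below _ _ _ _ _ _ c1 (fun v' h => esym (IHv v' h)) e2 e1 w2 w1 lt_ba).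
    - by apply: val_inj; apply: (dw _ _ a); rewrite ?sw ?ltn_ord // w2 eq_ab.
  by apply: (@perm_inj _ pi1); rewrite e1 eq_diam // e2.
by apply: (@perm_inj _ pi2); rewrite -eq_diam // e1 e2.
Qed.

Lemma card_covered n (w : seq letter) : size w = n -> distinct_ints w ->
  #|[set pi : 'S_n | coversb w pi]| <= n ^_ (count_mem Diamond w).
Proof.
move=> sw dw; pose D := {x : 'I_n | nth Diamond w x == Diamond}.
have card_D : #|{: D}| = count_mem Diamond w.
  rewrite card_sig cardE /enum_mem size_filter -enumT.
  rewrite -[in RHS](mkseq_nth Diamond w) sw /mkseq [RHS]count_map.
  by rewrite -val_enum_ord count_map.
pose restrict (pi : 'S_n) : {ffun D -> 'I_n} := [ffun x => pi (val x)].
rewrite -card_D -[n in n ^_ _]card_ord -card_inj_ffuns -(card_in_imset (f := restrict)).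
  apply: subset_leq_card; apply/subsetP => _ /imsetP [pi _ ->]; rewrite inE.
  by apply/injectiveP => x y; rewrite !ffunE => /perm_inj /val_inj.
move=> pi1 pi2; rewrite !inE => /coversP c1 /coversP c2 /ffunP eq_D.
apply: perm_determined sw dw c1 c2 _ => x wx.
by have := eq_D (exist _ x (introT eqP wx)); rewrite !ffunE.
Qed.

Lemma card_bigcup_le (T : finType) M (A : nat -> {set T}) :
  #|\bigcup_(i < M) A i| <= \sum_(i < M) #|A i|.
Proof.
elim: M => [|M IH]; first by rewrite !big_ord0 cards0.
by rewrite !big_ord_recr /= (leq_trans (leq_card_setU _ _)) // leq_add2r.
Qed.

Lemma leq_ffact_fact n k : n ^_ k <= n`!.
Proof.
case: (leqP k n) => [le_kn | /ffact_small ->//].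
by rewrite -(ffact_fact le_kn) leq_pmulr ?fact_gt0.
Qed.

Lemma card_covered_factor n u j : upword n u -> j <= size u - n ->
  #|[set pi : 'S_n | coversb (factor n u j) pi]| * (n - count_mem Diamond u)`! <= n`!.
Proof.
case=> le_nu _ _ uniq_u _ hj; have hjn : j + n <= size u by lia.
have := card_covered (size_factor hjn) (uniq_u j hj).
have := count_factor_le n u j; have := count_size (pred1 Diamond) (factor n u j).
rewrite size_factor //; set d := count_mem Diamond _ => le_dn le_df le_C.
by rewrite -(ffact_fact le_dn); apply: leq_mul le_C (leq_fact _); lia.
Qed.

Lemma fact_le_windows n u : upword n u -> (n - count_mem Diamond u)`! <= size u - n + 1.
Proof.
move=> up; have [_ _ _ _ cov_u] := up; set M := size u - n + 1.
pose C j := [set pi : 'S_n | coversb (factor n u j) pi].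
have cover_all : n`! <= \sum_(j < M) #|C j|.
  apply: leq_trans (card_bigcup_le M C); rewrite -card_Sn.
  apply/subset_leq_card/subsetP => pi _; have [j [[hj /coversP cov] _]] := cov_u pi.
  have jM : j < M by lia.
  by apply/bigcupP; exists (Ordinal jM); rewrite ?inE.
have : n`! * (n - count_mem Diamond u)`! <= M * n`!.
  apply: leq_trans (leq_mul cover_all (leqnn _)) _.
  rewrite big_distrl -[M in M * _]card_ord -sum_nat_const /=.
  by apply: leq_sum => j _; apply: card_covered_factor up _; have := ltn_ord j; lia.
by rewrite mulnC leq_pmul2r ?fact_gt0.
Qed.

Theorem theorem4 (n : nat) (u : seq letter) :
  upword n u -> ~~ trivial_word u ->
  n <= 3 * count_mem Diamond u + 1.
Proof.
move=> up _; set f := count_mem Diamond u.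
rewrite leqNgt; apply/negP => big.
have f_gt0 : 0 < f by case: up => _ _ diam_u _ _; rewrite /f -has_count has_pred1.
have few : 2 * f + 3 <= n by lia.
have := windows_le_mul_count up few; have := fact_le_windows up.
have := leq_ffact_fact (n - f) 2; rewrite ffactnS ffactn1 -/f.
nia.
Qed.
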